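(* Let $\mathbb I$ be an index coding problem with message set ${\cal W}$ and let ${\cal W}'\subseteq{\cal W}$. If there is a ${\cal W}'$-restricted internal conflict, then the restricted problem ${\mathbb I}_{{\cal W}'}$ admits no valid scalar linear index code of length $2$ over any finite field. If there are no ${\cal W}'$-restricted internal conflicts, then ${\mathbb I}_{{\cal W}'}$ admits a valid scalar linear index code of length $2$ over every sufficiently large finite field.
   Context: Index coding setup: An index coding problem $\mathbb I$ over a finite field $\mathbb F$ consists of a set of messages ${\cal W}=\{W_1,\dots,W_n\}$ (each message is a symbol of $\mathbb F$ in the scalar setting), a set of receivers $[1:T]$, and for each receiver $j$ a demand set $D(j)\subseteq{\cal W}$ and a side-information set $S(j)\subseteq {\cal W}\setminus D(j)$. Every message is demanded by at least one receiver. For a receiver $j$ and $W_k\in D(j)$, the interfering set is $Interf_k(j)={\cal W}\setminus(\{W_k\}\cup S(j))$; if $W_k\notin D(j)$ then $Interf_k(j)=\emptyset$. A scalar linear index code of length $L$ over $\mathbb F$ is an assignment of vectors $V_1,\dots,V_n\in\mathbb F^L$ to the messages; the source broadcasts $\sum_{i=1}^n V_iW_i\in\mathbb F^L$, and the code is valid if every receiver $j$ can recover every message of $D(j)$ from the broadcast codeword and the messages in $S(j)$. Two distinct messages $W_i,W_k$ are in conflict if there is a receiver $j$ with $W_k\in D(j)$ and $W_i\in Interf_k(j)$, or a receiver $j$ with $W_i\in D(j)$ and $W_k\in Interf_i(j)$. Alignment graph: the graph with vertex set ${\cal W}$ in which distinct $W_a,W_b$ are adjacent if there exist a receiver $j$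 and a message $W_k\in D(j)$ with $W_k\notin\{W_a,W_b\}$ and $W_a,W_b\notin S(j)$. An alignment set is the vertex set of a connected component of the alignment graph. An internal conflict is a conflict between two messages lying in the same alignment set. Restricted problem: for ${\cal W}'\subseteq{\cal W}$, the ${\cal W}'$-restricted index coding problem ${\mathbb I}_{{\cal W}'}$ has message set ${\cal W}'$, receivers the receivers $j$ of $\mathbb I$ with $D(j)\cap{\cal W}'\neq\emptyset$, and for each such $j$ demand set $D(j)\cap{\cal W}'$ and side-information set $S(j)\cap{\cal W}'$. The ${\cal W}'$-restricted alignment graph, alignment sets and internal conflicts are the alignment graph, alignment sets and internal conflicts of ${\mathbb I}_{{\cal W}'}$ (conflicts being computed in ${\mathbb I}_{{\cal W}'}$). *)

From HB Require Import structures.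
From mathcomp Require Import all_boot all_order all_algebra all_field.
Set Implicit Arguments. Unset Strict Implicit. Unset Printing Implicit Defensive.
Import GRing.Theory.
Local Open Scope ring_scope.

(* An index coding problem: messages indexed by a finite type M (the set
   W = M), receivers indexed by a finite type R, demand sets D j and
   side-information sets S j. *)
Definition index_problem (M R : finType) (D S : R -> {set M}) : Prop :=
  (forall j, [disjoint S j & D j]) /\ (forall m : M, exists j, m \in D j).

Definition rreceiver (M R : finType) (D : R -> {set M}) (W' : {set M}) (j : R) : bool :=
  D j :&: W' != set0.
Definition rdemand (M R : finType) (D : R -> {set M}) (W' : {set M}) (j : R) : {set M} :=
  D j :&: W'.
Definition rside (M R : finType) (S : R -> {set M}) (W' : {set M}) (j : R) : {set M} :=
  S j :&: W'.

Definition rinterf (M R : finType) (D S : R -> {set M}) (W' : {set M}) (k : M) (j : R)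
  : {set M} :=
  if k \in rdemand D W' j then W' :\: (k |: rside S W' j) else set0.

Definition rconflict (M R : finType) (D S : R -> {set M}) (W' : {set M}) (i k : M) : bool :=
  [&& i \in W', k \in W', i != k &
      [exists j, rreceiver D W' j &&
        ((i \in rinterf D S W' k j) || (k \in rinterf D S W' i j))]].

Definition ralign_edge (M R : finType) (D S : R -> {set M}) (W' : {set M}) (a b : M) : bool :=
  [&& a \in W', b \in W', a != b &
      [exists j, rreceiver D W' j &&
        [exists k, [&& k \in rdemand D W' j, k \notin [set a; b],
                       a \notin rside S W' j & b \notin rside S W' j]]]].

Definition same_ralign_set (M R : finType) (D S : R -> {set M}) (W' : {set M}) (a b : M)
  : bool :=
  [&& a \in W', b \in W' & connect (ralign_edge D S W') a b].

Definition has_rinternal_conflict (M R : finType) (D S : R -> {set M}) (W' : {set M})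
  : bool :=
  [exists a, exists b, rconflict D S W' a b && same_ralign_set D S W' a b].

Definition codeword (M : finType) (F : fieldType) (L : nat) (W' : {set M})
  (V : M -> 'rV[F]_L) (w : M -> F) : 'rV[F]_L :=
  \sum_(i in W') w i *: V i.

(* Valid scalar linear index code of length L over F for I_{W'}: every
   receiver of I_{W'} recovers each demanded message from the codeword and
   the messages in its side information (messages outside S j :&: W' are
   masked to 0 in the decoder's input). *)
Definition valid_rcode (M R : finType) (F : fieldType) (L : nat)
  (D S : R -> {set M}) (W' : {set M}) (V : M -> 'rV[F]_L) : Prop :=
  forall j, rreceiver D W' j -> forall k, k \in rdemand D W' j ->
    exists dec : 'rV[F]_L -> (M -> F) -> F,
      forall w : M -> F,
        dec (codeword W' V w) (fun i => if i \in rside S W' j then w i else 0) = w k.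

From HB Require Import structures.
From mathcomp Require Import all_boot all_order all_algebra all_field.
From mathcomp Require Import ring.
From Stdlib Require Import FunctionalExtensionality.
Set Implicit Arguments. Unset Strict Implicit. Unset Printing Implicit Defensive.
Import GRing.Theory.
Local Open Scope ring_scope.

(** A length-2 code assigns to each message a vector of [F^2], and receiver
    [j] decodes a demanded [k] exactly when no combination of [V k] and the
    vectors of the interfering messages vanishes with a nonzero coefficient on
    [k].  Two messages that both interfere at [j] with a demanded [k] of [j]
    therefore carry parallel (nonzero) vectors: otherwise they would span
    [F^2] and hence [V k].  Parallelism propagates along the alignment graph,
    whereas an interfering message must be non-parallel to the demanded one,
    so an internal conflict makes every length-2 code invalid.
    Conversely, give [a] the vector [(1, x a)] where [x] takes one value per
    alignment set and distinct values on distinct sets (possible once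
    [#|F| >= #|M|]).  At receiver [j] all messages interfering with [k] lie in
    a single alignment set, so they share a slope [y], and [y != x k] because
    there is no internal conflict; the functional [(c0, c1) |-> (c1 - y c0)/(x k - y)]
    then kills the interference and reads off [w k] up to side information. *)

Section Codewords.
Variables (M : finType) (F : fieldType) (L : nat) (W' : {set M}) (V : M -> 'rV[F]_L).

Definition single (a : M) (c : F) : M -> F := fun i => if i == a then c else 0.

Lemma single_id a c : single a c a = c.
Proof. by rewrite /single eqxx. Qed.

Lemma single_eq0 a c i : i != a -> single a c i = 0.
Proof. by rewrite /single => /negbTE->. Qed.

Lemma codeword0 : codeword W' V (fun=> 0) = 0.
Proof. by rewrite /codeword big1 // => i _; rewrite scale0r. Qed.

Lemma codewordD w1 w2 : codeword W' V (w1 \+ w2) = codeword W' V w1 + codeword W' V w2.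
Proof. by rewrite /codeword -big_split; apply: eq_bigr => i _; rewrite scalerDl. Qed.

Lemma codeword_single a c : a \in W' -> codeword W' V (single a c) = c *: V a.
Proof.
move=> aW; rewrite /codeword (bigD1 a) //= single_id big1 ?addr0 // => i /andP[_ ia].
by rewrite single_eq0 // scale0r.
Qed.

End Codewords.

Section RestrictedProblem.
Variables (M R : finType) (D S : R -> {set M}) (W' : {set M}).

Lemma rdemand_notin_rside j k :
  index_problem D S -> k \in rdemand D W' j -> k \notin rside S W' j.
Proof.
move=> [disjSD _]; rewrite !inE => /andP[kD _].
by rewrite (disjointFl (disjSD j) kD).
Qed.

Lemma mem_rinterf j k i : k \in rdemand D W' j ->
  (i \in rinterf D S W' k j) = [&& i \in W', i != k & i \notin rside S W' j].
Proof. by move=> kd; rewrite /rinterf kd in_setD in_setU1 negb_or andbC andbA. Qed.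

Lemma rinterf_rdemand j k i : i \in rinterf D S W' k j -> k \in rdemand D W' j.
Proof. by rewrite /rinterf; case: ifP; rewrite ?inE. Qed.

Lemma rinterf_rconflict j k i :
  rreceiver D W' j -> i \in rinterf D S W' k j -> rconflict D S W' i k.
Proof.
move=> rj iI; have kd := rinterf_rdemand iI.
move: (iI); rewrite mem_rinterf // => /and3P[iW ik _].
have kW : k \in W' by move: kd; rewrite inE => /andP[].
by rewrite /rconflict iW kW ik; apply/existsP; exists j; rewrite rj iI.
Qed.

Lemma rinterf_ralign_edge j k a b : rreceiver D W' j ->
  a \in rinterf D S W' k j -> b \in rinterf D S W' k j -> a != b ->
  ralign_edge D S W' a b.
Proof.
move=> rj aI bI ab; have kd := rinterf_rdemand aI.
move: aI bI; rewrite !mem_rinterf // => /and3P[aW ak aS] /and3P[bW bk bS].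
rewrite /ralign_edge aW bW ab; apply/existsP; exists j; rewrite rj.
by apply/existsP; exists k; rewrite kd aS bS !inE negb_or !(eq_sym k) ak bk.
Qed.

Lemma ralign_edge_sym : symmetric (ralign_edge D S W').
Proof.
suff edge_flip a b : ralign_edge D S W' a b -> ralign_edge D S W' b a.
  by move=> a b; apply/idP/idP; apply: edge_flip.
case/and4P=> aW bW ab /existsP[j /andP[rj /existsP[k /and4P[kd kab aS bS]]]].
rewrite /ralign_edge bW aW eq_sym ab; apply/existsP; exists j; rewrite rj.
apply/existsP; exists k; rewrite kd bS aS !andbT.
by move: kab; rewrite !inE orbC.
Qed.

End RestrictedProblem.

Section Decodability.
Variables (M R : finType) (F : fieldType) (L : nat).
Variables (D S : R -> {set M}) (W' : {set M}) (V : M -> 'rV[F]_L).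

Definition rdecodable j k : Prop :=
  exists dec : 'rV[F]_L -> (M -> F) -> F,
    forall w : M -> F,
      dec (codeword W' V w) (fun i => if i \in rside S W' j then w i else 0) = w k.

Lemma rdecodable_null j k w : rdecodable j k ->
  codeword W' V w = 0 -> (forall i, i \in rside S W' j -> w i = 0) -> w k = 0.
Proof.
move=> [dec decK] cw0 wS.
have dec0 : dec 0 (fun i => if i \in rside S W' j then 0 else 0) = 0.
  by have := decK (fun=> 0); rewrite codeword0.
rewrite -(decK w) cw0 -[RHS]dec0; congr dec; apply: functional_extensionality => i.
by case: ifP => // /wS.
Qed.

Lemma rdecodable_functional j k (u : 'cV[F]_L) :
  k \in rdemand D W' j -> k \notin rside S W' j ->
  (V k *m u) ord0 ord0 = 1 ->
  (forall i, i \in rinterf D S W' k j -> (V i *m u) ord0 ord0 = 0) ->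
  rdecodable j k.
Proof.
move=> kd kS uk uI.
have kW : k \in W' by move: kd; rewrite inE => /andP[].
exists (fun c s => (c *m u) ord0 ord0 - \sum_(i in rside S W' j) s i * (V i *m u) ord0 ord0).
move=> w; have -> : (codeword W' V w *m u) ord0 ord0
                     = \sum_(i in W') w i * (V i *m u) ord0 ord0.
  by rewrite /codeword mulmx_suml summxE; apply: eq_bigr => i _; rewrite -scalemxAl mxE.
rewrite (bigD1 k) //= uk mulr1 (bigID (mem (rside S W' j))) /=.
rewrite [X in _ + (_ + X) - _]big1 ?addr0.
  rewrite [X in _ - X](eq_bigr (fun i => w i * (V i *m u) ord0 ord0)) => [|i ->] //.
  rewrite (eq_bigl (mem (rside S W' j))) ?addrK // => i /=.
  case iS: (i \in rside S W' j); rewrite ?andbF ?andbT //.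
  by move: (iS); rewrite inE => /andP[_ ->]; apply: contraTneq iS => ->.
move=> i /andP[/andP[iW ik] iS]; rewrite uI ?mulr0 //.
by rewrite mem_rinterf // iW ik.
Qed.

End Decodability.

Section Cross.
Variable F : fieldType.
Implicit Types u v z : 'rV[F]_2.

Definition cross u v : F := u ord0 ord0 * v ord0 ord_max - u ord0 ord_max * v ord0 ord0.

Lemma row2_eq u v : u ord0 ord0 = v ord0 ord0 -> u ord0 ord_max = v ord0 ord_max -> u = v.
Proof.
move=> e0 e1; apply/rowP => l; have [->|->] // : l = ord0 \/ l = ord_max.
by case: l => -[|[|//]] ?; [left|right]; apply: val_inj.
Qed.

Lemma crossC u v : cross u v = - cross v u.
Proof. by rewrite /cross; ring. Qed.

Lemma crossZl c u v : cross (c *: u) v = c * cross u v.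
Proof. by rewrite /cross !mxE; ring. Qed.

Lemma crossvv u : cross u u = 0.
Proof. by rewrite /cross mulrC subrr. Qed.

(* Three vectors of [F^2] are always dependent (Cramer's rule). *)
Lemma cross_dependence u v z : cross u v *: z + cross v z *: u + cross z u *: v = 0.
Proof. by apply: row2_eq; rewrite !mxE /cross; ring. Qed.

Lemma cross_eq0_scale u v : u != 0 -> cross u v = 0 -> exists c, v = c *: u.
Proof.
move=> u_neq0 uv0; have [u0|u0] := eqVneq (u ord0 ord0) 0; last first.
  exists (v ord0 ord0 / u ord0 ord0); apply: row2_eq; rewrite !mxE; first by field.
  transitivity (v ord0 ord_max - cross u v / u ord0 ord0); first by rewrite uv0 mul0r subr0.
  by rewrite /cross; field.
have u1 : u ord0 ord_max != 0.
  by apply: contraNneq u_neq0 => u1; apply/eqP/row2_eq; rewrite mxE.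
exists (v ord0 ord_max / u ord0 ord_max); apply: row2_eq; rewrite !mxE; last by field.
transitivity (v ord0 ord0 + cross u v / u ord0 ord_max); first by rewrite uv0 mul0r addr0.
by rewrite /cross u0; field.
Qed.

Lemma cross_trans v u z : v != 0 -> cross u v = 0 -> cross v z = 0 -> cross u z = 0.
Proof.
move=> v_neq0 uv0 vz0; have [c ->] : exists c, u = c *: v.
  by apply: cross_eq0_scale; rewrite // crossC uv0 oppr0.
by rewrite crossZl vz0 mulr0.
Qed.

End Cross.

Section LengthTwoObstruction.
Variables (M R : finType) (D S : R -> {set M}) (W' : {set M}) (F : fieldType).
Variable V : M -> 'rV[F]_2.
Hypotheses (HI : index_problem D S) (HV : valid_rcode D S W' V).

Lemma valid_rcode_neq0 i : i \in W' -> V i != 0.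
Proof.
move=> iW; have [j iD] := HI.2 i.
have id : i \in rdemand D W' j by rewrite inE iD.
have rj : rreceiver D W' j by apply/set0Pn; exists i.
apply/eqP => Vi0; suff: (1 : F) = 0 by move/eqP; rewrite oner_eq0.
have := rdecodable_null (w := single i 1) (HV rj id).
rewrite codeword_single // Vi0 scaler0 single_id => /(_ erefl); apply => l lS.
rewrite single_eq0 //; apply: contraTneq lS => ->.
exact: (rdemand_notin_rside HI id).
Qed.

Lemma ralign_edge_cross a b : ralign_edge D S W' a b -> cross (V a) (V b) = 0.
Proof.
case/and4P=> aW bW _ /existsP[j /andP[rj /existsP[k /and4P[kd kab aS bS]]]].
have kW : k \in W' by move: kd; rewrite inE => /andP[].
have kS := rdemand_notin_rside HI kd.
move: kab; rewrite !inE negb_or => /andP[ka kb].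
pose w := single k (cross (V a) (V b)) \+ single a (cross (V b) (V k))
          \+ single b (cross (V k) (V a)).
have := rdecodable_null (w := w) (HV rj kd).
rewrite /w !codewordD !codeword_single // cross_dependence /= single_id.
rewrite !single_eq0 ?addr0 // => /(_ erefl); apply => l lS /=.
by rewrite !single_eq0 ?addr0 //; apply: contraTneq lS => ->.
Qed.

Lemma connect_ralign_cross a b :
  a \in W' -> connect (ralign_edge D S W') a b -> cross (V a) (V b) = 0.
Proof.
move=> aW /connectP[p + ->]; elim: p a aW => [|c p IH] a aW /=.
  by rewrite crossvv.
case/andP=> ac cp; have cW : c \in W' by case/and4P: ac.
exact: cross_trans (valid_rcode_neq0 cW) (ralign_edge_cross ac) (IH c cW cp).
Qed.

Lemma rinterf_cross j a b :
  rreceiver D W' j -> a \in rinterf D S W' b j -> cross (V a) (V b) != 0.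
Proof.
move=> rj aI; have bd := rinterf_rdemand aI.
move: (aI); rewrite mem_rinterf // => /and3P[aW ab aS].
have bW : b \in W' by move: bd; rewrite inE => /andP[].
have bS := rdemand_notin_rside HI bd.
apply/eqP => /(cross_eq0_scale (valid_rcode_neq0 aW)) [c Vb].
suff: (1 : F) = 0 by move/eqP; rewrite oner_eq0.
have := rdecodable_null (w := single b 1 \+ single a (- c)) (HV rj bd).
rewrite codewordD !codeword_single // Vb scaleNr scale1r subrr /= single_id.
rewrite single_eq0 1?eq_sym // addr0 => /(_ erefl); apply => l lS /=.
by rewrite !single_eq0 ?addr0 //; apply: contraTneq lS => ->.
Qed.

Lemma rconflict_cross a b : rconflict D S W' a b -> cross (V a) (V b) != 0.
Proof.
case/and4P=> _ _ _ /existsP[j /andP[rj /orP[aI|bI]]]; first exact: rinterf_cross aI.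
by rewrite crossC oppr_eq0; apply: rinterf_cross bI.
Qed.

Lemma valid_rcode2_no_rinternal_conflict : ~~ has_rinternal_conflict D S W'.
Proof.
apply/existsP => -[a /existsP[b /andP[ab /and3P[aW _ con]]]].
by have /eqP := connect_ralign_cross aW con; rewrite (negbTE (rconflict_cross ab)).
Qed.

End LengthTwoObstruction.

Section SlopeCode.
Variables (M R : finType) (D S : R -> {set M}) (W' : {set M}) (F : fieldType).
Variable x : M -> F.
Hypotheses (HI : index_problem D S) (Hnc : ~~ has_rinternal_conflict D S W').
Hypothesis x_eq : forall a b, (x a == x b) = connect (ralign_edge D S W') a b.

Definition slope_code a : 'rV[F]_2 := \row_(l < 2) (if l == ord0 then 1 else x a).

Definition slope_functional (y : F) : 'cV[F]_2 :=
  \col_(l < 2) (if l == ord0 then - y else 1).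

Lemma slope_code_mul a c y :
  (slope_code a *m (c *: slope_functional y)) ord0 ord0 = c * (x a - y).
Proof. by rewrite -scalemxAr !mxE big_ord_recl big_ord1 !mxE /=; ring. Qed.

Lemma rinterf_common_slope j k : rreceiver D W' j -> k \in rdemand D W' j ->
  exists2 y, x k != y & forall i, i \in rinterf D S W' k j -> x i = y.
Proof.
move=> rj kd; case: (set_0Vmem (rinterf D S W' k j)) => [noI|[i0 i0I]].
  exists (x k + 1) => [|i]; last by rewrite noI inE.
  by rewrite -subr_eq0 opprD addrA subrr add0r oppr_eq0 oner_eq0.
exists (x i0) => [|i iI].
  have kW : k \in W' by move: kd; rewrite inE => /andP[].
  have i0W : i0 \in W' by move: i0I; rewrite mem_rinterf // => /andP[].
  rewrite eq_sym x_eq; apply: contraNN Hnc => con; apply/existsP; exists i0.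
  apply/existsP; exists k.
  by rewrite (rinterf_rconflict rj i0I) /same_ralign_set i0W kW con.
have [->//|ii0] := eqVneq i i0; apply/eqP; rewrite x_eq; apply: connect1.
exact: rinterf_ralign_edge rj iI i0I ii0.
Qed.

Lemma slope_code_valid : valid_rcode D S W' slope_code.
Proof.
move=> j rj k kd; have [y yk yI] := rinterf_common_slope rj kd.
have xky_neq0 : x k - y != 0 by rewrite subr_eq0.
apply: (rdecodable_functional (u := (x k - y)^-1 *: slope_functional y)
          kd (rdemand_notin_rside HI kd)).
- by rewrite slope_code_mul mulVf.
- by move=> i iI; rewrite slope_code_mul (yI i iI) subrr mulr0.
Qed.

End SlopeCode.

Definition enum_embed (T U : finType) (u0 : U) (t : T) : U := nth u0 (enum U) (enum_rank t).

Lemma enum_embed_inj (T U : finType) (u0 : U) :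
  (#|T| <= #|U|)%N -> injective (@enum_embed T U u0).
Proof.
move=> le_TU a b; rewrite /enum_embed => /eqP.
have lt_rank (t : T) : (enum_rank t < size (enum U))%N.
  by rewrite -cardE; apply: leq_trans (ltn_ord _) le_TU.
by rewrite nth_uniq ?lt_rank ?enum_uniq // => /eqP /val_inj /enum_rank_inj.
Qed.

Theorem theorem5 (M R : finType) (D S : R -> {set M}) (W' : {set M}) :
  index_problem D S ->
  (has_rinternal_conflict D S W' ->
     forall (F : finFieldType) (V : M -> 'rV[F]_2), ~ valid_rcode D S W' V) /\
  (~~ has_rinternal_conflict D S W' ->
     exists N : nat, forall F : finFieldType, (N <= #|F|)%N ->
       exists V : M -> 'rV[F]_2, valid_rcode D S W' V).
Proof.
move=> HI; split.
  move=> conflict F V HV.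
  by have := valid_rcode2_no_rinternal_conflict HI HV; rewrite conflict.
move=> Hnc; exists #|M| => F le_MF.
pose x a : F := enum_embed 0 (fingraph.root (ralign_edge D S W') a).
exists (slope_code x); apply: slope_code_valid HI Hnc _ => a b.
rewrite (inj_eq (enum_embed_inj le_MF)).
have esym := sym_connect_sym (@ralign_edge_sym _ _ D S W').
exact: sameP eqP (fingraph.rootP esym).
Qed.
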